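(* Let $|\psi\rangle$ be a pure three-qubit state and let $i\neq j$, $i,j\in\{A,B,C\}$. If $\mathcal C_{ij}^2>\frac49$, then the reduced state $\rho_{ij}$ violates the three-settings CJWR linear steering inequality, i.e. $S_{ij}>1$.
   Context: For a two-qubit state $\rho$ let $t_{kl}=\mathrm{Tr}[\rho\,\sigma_k\otimes\sigma_l]$ ($\sigma_k$ Pauli matrices) and $S(\rho)=\sum_{k,l=1}^3 t_{kl}^2$; $\rho_{ij}$ is the two-qubit reduced state of qubits $i,j$ and $S_{ij}=S(\rho_{ij})$. $\mathcal C_{ij}$ is the Wootters concurrence of $\rho_{ij}$: $\mathcal C(\rho)=\max\{0,\lambda_1-\lambda_2-\lambda_3-\lambda_4\}$, with $\lambda_1\ge\dots\ge\lambda_4$ the square roots of the eigenvalues of $\rho(\sigma_2\otimes\sigma_2)\rho^*(\sigma_2\otimes\sigma_2)$. The three-settings CJWR inequality $\frac1{\sqrt3}|\sum_{k=1}^3\langle A_k\otimes B_k\rangle|\le1$ ($A_k=\hat a_k\cdot\vec\sigma$ with unit $\hat a_k$, $B_k=\hat b_k\cdot\vec\sigma$ with orthonormal $\hat b_k$) has maximum $\sqrt{S(\rho)}$ over settings, so it is violated iff $S(\rho)>1$. *)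

From HB Require Import structures.
From mathcomp Require Import all_boot all_order all_algebra.
From mathcomp Require Import complex.
Set Implicit Arguments. Unset Strict Implicit. Unset Printing Implicit Defensive.
Import Order.TTheory GRing.Theory Num.Theory.
Local Open Scope ring_scope.

Section Defs.
Variable R : rcfType.
Local Notation C := R[i].

(* Two-qubit index convention: e : 'I_4 encodes the basis state |a b>
   with a = e %/ 2 (first qubit) and b = e %% 2 (second qubit). *)
Definition qb1 (e : 'I_4) : 'I_2 := inord (e %/ 2).
Definition qb2 (e : 'I_4) : 'I_2 := inord (e %% 2).

Definition kron2 (A B : 'M[C]_2) : 'M[C]_4 :=
  \matrix_(e, f) (A (qb1 e) (qb1 f) * B (qb2 e) (qb2 f)).

(* Pauli matrices sigma_1, sigma_2, sigma_3 (k : 'I_3 stands for k+1). *)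
Definition pauli (k : 'I_3) : 'M[C]_2 :=
  \matrix_(a, b)
    (if val k == 0%N then (if a == b then 0 else 1)
     else if val k == 1%N then
       (if a == b then 0 else if val a == 0%N then - 'i else 'i)
     else (if a == b then (if val a == 0%N then 1 else -1) else 0)).

(* A pure three-qubit state: amplitudes psi x on computational basis states
   x : {ffun 'I_3 -> 'I_2} (x k = value of qubit k; qubits A,B,C = 0,1,2). *)
Definition three_qubit_state := {ffun 'I_3 -> 'I_2} -> C.

Definition normalized (psi : three_qubit_state) : Prop :=
  \sum_x `|psi x| ^+ 2 = 1.

(* Reduced state rho_ij = Tr_k |psi><psi| (k the remaining qubit), written
   in the basis |x_i x_j> of qubits i (first factor) and j (second factor). *)
Definition reduced (psi : three_qubit_state) (i j : 'I_3) : 'M[C]_4 :=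
  \matrix_(e, f)
    \sum_(x : {ffun 'I_3 -> 'I_2}) \sum_(y : {ffun 'I_3 -> 'I_2} | [&& x i == qb1 e, x j == qb2 e, y i == qb1 f,
                        y j == qb2 f &
                        [forall k, (k != i) && (k != j) ==> (x k == y k)]])
       psi x * (psi y)^*.

Definition tcorr (rho : 'M[C]_4) (k l : 'I_3) : C :=
  \tr (rho *m kron2 (pauli k) (pauli l)).

Definition Sval (rho : 'M[C]_4) : C := \sum_k \sum_l tcorr rho k l ^+ 2.

Definition sy2 : 'M[C]_4 := kron2 (pauli 1) (pauli 1).
Definition rho_tilde (rho : 'M[C]_4) : 'M[C]_4 :=
  sy2 *m map_mx (fun z : C => z^*) rho *m sy2.

(* eigenvalues (with multiplicity) of rho * rho_tilde: the roots of its
   characteristic polynomial, which splits over the closed field R[i] *)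
Definition wootters_eigs (rho : 'M[C]_4) : seq C :=
  sval (closed_field_poly_normal (char_poly (rho *m rho_tilde rho))).

(* lambda_1 >= ... >= lambda_4: square roots of these eigenvalues
   (they are real and nonnegative; we take real parts to land in R). *)
Definition wootters_lambdas (rho : 'M[C]_4) : seq R :=
  sort (fun a b : R => b <= a)
       [seq complex.Re (sqrtC z) | z <- wootters_eigs rho].

Definition concurrence (rho : 'M[C]_4) : R :=
  let l := wootters_lambdas rho in
  Num.max 0 (l`_0 - l`_1 - l`_2 - l`_3).

End Defs.

(* Write the reduced state of qubits i, j as rho = |u><u| + |v><v|, where u and v
   are the branches of psi on the two states of the remaining qubit. For such a
   rank-two state S(rho) = 1 + 2 (mu1 + mu2) - 4 det G, where G is the Gram matrix
   of (u, v) and mu1 >= mu2 are the eigenvalues of conj(K) K for the symmetric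
   matrix K = [u v]^T (sigma_2 (x) sigma_2) [u v]. The nonzero eigenvalues of
   rho rho~ are mu1 and mu2, so C = sqrt mu1 - sqrt mu2. By Cauchy-Schwarz the
   operator norm of K is at most the top eigenvalue g of G, hence mu1 <= g^2,
   while det G = g (1 - g). If C > 2/3 then g >= sqrt mu1 > 2/3, and then
   2 mu1 > 4 g (1 - g), i.e. S > 1. *)

From HB Require Import structures.
From mathcomp Require Import all_boot all_order all_algebra.
From mathcomp Require Import complex ring lra.
Import Order.TTheory GRing.Theory Num.Theory.
Set Implicit Arguments. Unset Strict Implicit. Unset Printing Implicit Defensive.
Local Open Scope complex_scope.
Local Open Scope ring_scope.

Definition b0 : 'I_2 := @Ordinal 2 0 isT.
Definition b1 : 'I_2 := @Ordinal 2 1 isT.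
Definition k0 : 'I_3 := @Ordinal 3 0 isT.
Definition k1 : 'I_3 := @Ordinal 3 1 isT.
Definition k2 : 'I_3 := @Ordinal 3 2 isT.
Definition o0 : 'I_4 := @Ordinal 4 0 isT.
Definition o1 : 'I_4 := @Ordinal 4 1 isT.
Definition o2 : 'I_4 := @Ordinal 4 2 isT.
Definition o3 : 'I_4 := @Ordinal 4 3 isT.

Lemma sum2 (V : nmodType) (F : 'I_2 -> V) : \sum_a F a = F b0 + F b1.
Proof. by rewrite !big_ord_recr big_ord0 /= add0r; congr (_ + _); apply/congr1/val_inj. Qed.

Lemma sum3 (V : nmodType) (F : 'I_3 -> V) : \sum_k F k = F k0 + F k1 + F k2.
Proof. by rewrite !big_ord_recr big_ord0 /= add0r; congr (_ + _ + _); apply/congr1/val_inj. Qed.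

Lemma sum4 (V : nmodType) (F : 'I_4 -> V) : \sum_e F e = F o0 + F o1 + F o2 + F o3.
Proof. by rewrite !big_ord_recr big_ord0 /= add0r; congr (_ + _ + _ + _); apply/congr1/val_inj. Qed.

Lemma qbE :
  (qb1 o0 = b0) * (qb1 o1 = b0) * (qb1 o2 = b1) * (qb1 o3 = b1) *
  (qb2 o0 = b0) * (qb2 o1 = b1) * (qb2 o2 = b0) * (qb2 o3 = b1).
Proof. by do !split; apply/val_inj; rewrite /= inordK. Qed.

Definition qbpair (a b : 'I_2) : 'I_4 := inord (a * 2 + b).

Lemma qb1_pair a b : qb1 (qbpair a b) = a.
Proof.
by apply/val_inj; case: a => [[|[|//]] ?]; case: b => [[|[|//]] ?]; rewrite /= !inordK.
Qed.

Lemma qb2_pair a b : qb2 (qbpair a b) = b.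
Proof.
by apply/val_inj; case: a => [[|[|//]] ?]; case: b => [[|[|//]] ?]; rewrite /= !inordK.
Qed.

Lemma qbpairK e : qbpair (qb1 e) (qb2 e) = e.
Proof. by apply/val_inj; case: e => [[|[|[|[|//]]]] ?]; rewrite /= !inordK. Qed.

Lemma eq_qb e f : (qb1 e == qb1 f) && (qb2 e == qb2 f) = (e == f).
Proof.
apply/andP/eqP => [[/eqP E1 /eqP E2]|-> //].
by rewrite -(qbpairK e) -(qbpairK f) E1 E2.
Qed.

Definition third (i j : 'I_3) : 'I_3 := inord (3 - i - j).

Lemma third_spec (i j : 'I_3) : i != j ->
  [/\ third i j != i, third i j != j & forall m, [|| m == i, m == j | m == third i j]].
Proof.
rewrite /third; case: i => [[|[|[|//]]] ?]; case: j => [[|[|[|//]]] ?] //= _;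
  (split; [ by rewrite -val_eqE /= inordK | by rewrite -val_eqE /= inordK |
    case => [[|[|[|//]]] ?]; by rewrite -!val_eqE /= ?inordK ]).
Qed.

Definition config (i j : 'I_3) (e : 'I_4) (k : 'I_2) : {ffun 'I_3 -> 'I_2} :=
  [ffun m => if m == i then qb1 e else if m == j then qb2 e else k].

Section Configurations.
Variables i j : 'I_3.
Hypothesis hij : i != j.

Lemma sum_config (V : nmodType) (F : {ffun 'I_3 -> 'I_2} -> V) :
  \sum_x F x = \sum_(k : 'I_2) \sum_(e : 'I_4) F (config i j e k).
Proof.
have [ti tj tP] := third_spec hij.
rewrite pair_big /= (reindex (fun p : 'I_2 * 'I_4 => config i j p.2 p.1)) //.
exists (fun x : {ffun 'I_3 -> 'I_2} => (x (third i j), qbpair (x i) (x j))).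
- case=> k e _ /=; rewrite !ffunE eqxx (negbTE ti) (negbTE tj) eq_sym (negbTE hij).
  by rewrite eqxx qbpairK.
- move=> x _; apply/ffunP => m; rewrite ffunE /=.
  case: (eqVneq m i) => [->|ni]; first by rewrite qb1_pair.
  case: (eqVneq m j) => [->|nj]; first by rewrite qb2_pair.
  by move: (tP m); rewrite (negbTE ni) (negbTE nj) /= => /eqP ->.
Qed.

Lemma reduced_cond_config e f e' k f' k' :
  [&& config i j e' k i == qb1 e, config i j e' k j == qb2 e,
      config i j f' k' i == qb1 f, config i j f' k' j == qb2 f &
      [forall m, (m != i) && (m != j) ==> (config i j e' k m == config i j f' k' m)]]
  = [&& e' == e, k == k' & f' == f].
Proof.
have [ti tj _] := third_spec hij.
have -> : [forall m, (m != i) && (m != j) ==> (config i j e' k m == config i j f' k' m)]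
          = (k == k').
  apply/forallP/idP => [/(_ (third i j))|/eqP-> m].
    by rewrite ti tj !ffunE (negbTE ti) (negbTE tj).
  by rewrite !ffunE; case: (m == i); case: (m == j); rewrite /= ?eqxx.
rewrite !ffunE eqxx [j == i]eq_sym (negbTE hij) eqxx -eq_qb -(eq_qb f').
by case: (qb1 e' == qb1 e); case: (qb2 e' == qb2 e); case: (k == k');
   case: (qb1 f' == qb1 f); case: (qb2 f' == qb2 f).
Qed.

End Configurations.

Section SquaredModulus.
Variable R : rcfType.
Local Notation C := R[i].

(* Locked, so that [ring] treats [abs2 z] as an atom. *)
Definition abs2 (z : C) : R := locked (complex.Re z ^+ 2 + complex.Im z ^+ 2).
Definition modulus (z : C) : R := Num.sqrt (abs2 z).
Definition sqnorm (p : 'I_4 -> C) : R := \sum_e abs2 (p e).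

(* Instances of [rmorphD] etc. stated with [%:C] and [^*] themselves: rewriting
   with the generic lemmas leaves the bundled morphism in the term, which [ring]
   does not identify with [%:C] or [^*]. *)
Lemma realcD (a b : R) : (a + b)%:C = a%:C + b%:C :> C. Proof. exact: rmorphD. Qed.
Lemma realcB (a b : R) : (a - b)%:C = a%:C - b%:C :> C. Proof. exact: rmorphB. Qed.
Lemma realcN (a : R) : (- a)%:C = - a%:C :> C. Proof. exact: rmorphN. Qed.
Lemma realcM (a b : R) : (a * b)%:C = a%:C * b%:C :> C. Proof. exact: rmorphM. Qed.
Lemma realcX (a : R) n : (a ^+ n)%:C = a%:C ^+ n :> C. Proof. exact: rmorphXn. Qed.
Lemma realc_nat n : (n%:R : R)%:C = n%:R :> C. Proof. exact: rmorph_nat. Qed.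
Definition realcE := (realcD, realcB, realcN, realcM, realcX, realc_nat).

Lemma conjD (a b : C) : (a + b)^* = a^* + b^*. Proof. exact: rmorphD. Qed.
Lemma conjB (a b : C) : (a - b)^* = a^* - b^*. Proof. exact: rmorphB. Qed.
Lemma conjN (a : C) : (- a)^* = - a^*. Proof. exact: rmorphN. Qed.
Lemma conjM (a b : C) : (a * b)^* = a^* * b^*. Proof. exact: rmorphM. Qed.
Lemma conjX (a : C) n : (a ^+ n)^* = a^* ^+ n. Proof. exact: rmorphXn. Qed.
Definition conjE := (conjD, conjB, conjN, conjM, conjX, @conjCK C).

Lemma abs2E z : (abs2 z)%:C = z * z^*.
Proof. by rewrite /abs2 -lock add_Re2_Im2 sqr_normc. Qed.

Lemma abs2_ge0 z : 0 <= abs2 z.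
Proof. by rewrite /abs2 -lock addr_ge0 ?sqr_ge0. Qed.

Lemma sqr_modulus z : modulus z ^+ 2 = abs2 z.
Proof. by rewrite sqr_sqrtr // abs2_ge0. Qed.

Lemma normc_modulus z : `|z| = (modulus z)%:C.
Proof. by rewrite normc_def /modulus /abs2 -lock. Qed.

Lemma abs2_eq0 z : (abs2 z == 0) = (z == 0).
Proof. by rewrite -mul_conjC_eq0 -abs2E -[0 : C]/((0 : R)%:C) (inj_eq (@complexI R)). Qed.

Lemma abs2J z : abs2 z^* = abs2 z.
Proof. by apply: complexI; rewrite !abs2E conjCK mulrC. Qed.

Lemma abs2N z : abs2 (- z) = abs2 z.
Proof. by apply: complexI; rewrite !abs2E conjN mulrNN. Qed.

Lemma abs2_real (a : R) : abs2 a%:C = a ^+ 2.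
Proof. by rewrite /abs2 -lock /= expr0n addr0. Qed.

Lemma sqnorm_ge0 p : 0 <= sqnorm p.
Proof. by apply: sumr_ge0 => e _; apply: abs2_ge0. Qed.

Lemma cauchy_schwarz4 (p q : 'I_4 -> C) :
  abs2 (\sum_e p e * q e) <= sqnorm p * sqnorm q.
Proof.
rewrite -subr_ge0.
pose m (a b : 'I_4) := abs2 (p a * (q b)^* - p b * (q a)^*).
have -> : sqnorm p * sqnorm q - abs2 (\sum_e p e * q e) =
          m o0 o1 + m o0 o2 + m o0 o3 + m o1 o2 + m o1 o3 + m o2 o3.
  apply: complexI; rewrite /m /sqnorm !sum4.
  by rewrite !realcE !abs2E !conjE; ring.
by rewrite /m !addr_ge0 ?abs2_ge0.
Qed.

End SquaredModulus.

Definition rank2_state (R : rcfType) (u v : 'I_4 -> R[i]) : 'M[R[i]]_4 :=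
  \matrix_(e, f) (u e * (u f)^* + v e * (v f)^*).

Section Branches.
Variable R : rcfType.
Variables (psi : three_qubit_state R) (i j : 'I_3).
Hypothesis hij : i != j.

Definition branch (k : 'I_2) (e : 'I_4) : R[i] := psi (config i j e k).

Lemma reduced_branches : reduced psi i j = rank2_state (branch b0) (branch b1).
Proof.
apply/matrixP => e f; rewrite !mxE.
transitivity (\sum_(k : 'I_2) psi (config i j e k) * (psi (config i j f k))^*);
  last by rewrite sum2.
rewrite (sum_config hij); apply: eq_bigr => k _.
rewrite (bigD1 e) //= [X in _ + X]big1 ?addr0 => [|e' ne].
  rewrite big_mkcond (sum_config hij) (bigD1 k) //= [X in _ + X]big1 ?addr0 => [|k' nk].
    rewrite (bigD1 f) //= [X in _ + X]big1 ?addr0 => [|f' nf].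
      by rewrite reduced_cond_config // !eqxx.
    by rewrite reduced_cond_config // (negbTE nf) !andbF.
  by rewrite big1 // => f' _; rewrite reduced_cond_config // eq_sym (negbTE nk) andbF.
rewrite big_mkcond (sum_config hij) big1 // => k' _; rewrite big1 // => f' _.
by rewrite reduced_cond_config // (negbTE ne).
Qed.

Lemma normalized_branches :
  normalized psi -> sqnorm (branch b0) + sqnorm (branch b1) = 1.
Proof.
rewrite /normalized (sum_config hij) sum2 => N1; apply: complexI.
rewrite realcD /sqnorm !rmorph_sum -[(1 : R)%:C]/(1 : R[i]) -N1.
by congr (_ + _); apply: eq_bigr => e _; rewrite sqr_normc -abs2E.
Qed.

End Branches.

Section PauliCorrelations.
Variable R : rcfType.
Local Notation C := R[i].

(* Real versions of the Pauli matrices ([pauli 1 = 'i *: rpauli 1]): they keep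
   the expansions below free of ['i]. *)
Definition rpauli (k : 'I_3) : 'M[C]_2 :=
  \matrix_(a, b)
    (if val k == 0%N then (if a == b then 0 else 1)
     else if val k == 1%N then
       (if a == b then 0 else if val a == 0%N then -1 else 1)
     else (if a == b then (if val a == 0%N then 1 else -1) else 0)).

Definition pauli_phase (k : 'I_3) : C := if val k == 1%N then 'i else 1.

Lemma pauli_rpauli k : pauli R k = pauli_phase k *: rpauli k.
Proof.
apply/matrixP => a b; rewrite !mxE /pauli_phase.
by case: k => [[|[|[|//]]] ?] /=; case: (a == b); case: (val a == 0%N);
  rewrite ?mulr0 ?mul1r ?mulrN1 ?mulr1.
Qed.

Lemma kron2Z a b (A B : 'M[C]_2) : kron2 (a *: A) (b *: B) = (a * b) *: kron2 A B.
Proof. by apply/matrixP => e f; rewrite !mxE; ring. Qed.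

Definition rtcorr (rho : 'M[C]_4) k l := \tr (rho *m kron2 (rpauli k) (rpauli l)).

Lemma Sval_rtcorr rho :
  Sval rho = \sum_k \sum_l (pauli_phase k * pauli_phase l) ^+ 2 * rtcorr rho k l ^+ 2.
Proof.
apply: eq_bigr => k _; apply: eq_bigr => l _.
by rewrite /tcorr !pauli_rpauli kron2Z -scalemxAr mxtraceZ exprMn.
Qed.

Lemma rtcorr00 rho : rtcorr rho k0 k0 = rho o0 o3 + rho o1 o2 + rho o2 o1 + rho o3 o0.
Proof. by rewrite /rtcorr /mxtrace !sum4 !mxE !sum4 !mxE !qbE /=; ring. Qed.
Lemma rtcorr01 rho : rtcorr rho k0 k1 = rho o0 o3 - rho o1 o2 + rho o2 o1 - rho o3 o0.
Proof. by rewrite /rtcorr /mxtrace !sum4 !mxE !sum4 !mxE !qbE /=; ring. Qed.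
Lemma rtcorr02 rho : rtcorr rho k0 k2 = rho o0 o2 - rho o1 o3 + rho o2 o0 - rho o3 o1.
Proof. by rewrite /rtcorr /mxtrace !sum4 !mxE !sum4 !mxE !qbE /=; ring. Qed.
Lemma rtcorr10 rho : rtcorr rho k1 k0 = rho o0 o3 + rho o1 o2 - rho o2 o1 - rho o3 o0.
Proof. by rewrite /rtcorr /mxtrace !sum4 !mxE !sum4 !mxE !qbE /=; ring. Qed.
Lemma rtcorr11 rho : rtcorr rho k1 k1 = rho o0 o3 - rho o1 o2 - rho o2 o1 + rho o3 o0.
Proof. by rewrite /rtcorr /mxtrace !sum4 !mxE !sum4 !mxE !qbE /=; ring. Qed.
Lemma rtcorr12 rho : rtcorr rho k1 k2 = rho o0 o2 - rho o1 o3 - rho o2 o0 + rho o3 o1.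
Proof. by rewrite /rtcorr /mxtrace !sum4 !mxE !sum4 !mxE !qbE /=; ring. Qed.
Lemma rtcorr20 rho : rtcorr rho k2 k0 = rho o0 o1 + rho o1 o0 - rho o2 o3 - rho o3 o2.
Proof. by rewrite /rtcorr /mxtrace !sum4 !mxE !sum4 !mxE !qbE /=; ring. Qed.
Lemma rtcorr21 rho : rtcorr rho k2 k1 = rho o0 o1 - rho o1 o0 - rho o2 o3 + rho o3 o2.
Proof. by rewrite /rtcorr /mxtrace !sum4 !mxE !sum4 !mxE !qbE /=; ring. Qed.
Lemma rtcorr22 rho : rtcorr rho k2 k2 = rho o0 o0 - rho o1 o1 - rho o2 o2 + rho o3 o3.
Proof. by rewrite /rtcorr /mxtrace !sum4 !mxE !sum4 !mxE !qbE /=; ring. Qed.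


(* [p^T (sigma_2 (x) sigma_2) q], see [flipmx_entries]. *)
Definition flipdot (p q : 'I_4 -> C) : C :=
  - p o0 * q o3 + p o1 * q o2 + p o2 * q o1 - p o3 * q o0.

Lemma Sval_outer2 (u ub v vb : 'I_4 -> C) :
  Sval (\matrix_(e, f) (u e * ub f + v e * vb f)) =
  (\sum_e (u e * ub e + v e * vb e)) ^+ 2
  + 2 * (flipdot u u * flipdot ub ub + 2 * (flipdot u v * flipdot ub vb)
         + flipdot v v * flipdot vb vb)
  - 4 * ((\sum_e u e * ub e) * (\sum_e v e * vb e)
         - (\sum_e u e * vb e) * (\sum_e ub e * v e)).
Proof.
rewrite Sval_rtcorr !sum3 /pauli_phase /= !mulr1 !mul1r !exprMn sqr_i !expr1n.
rewrite rtcorr00 rtcorr01 rtcorr02 rtcorr10 rtcorr11 rtcorr12 rtcorr20 rtcorr21 rtcorr22.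
by rewrite !mxE /flipdot !sum4; ring.
Qed.

End PauliCorrelations.

Section Rank2Correlations.
Variable R : rcfType.
Local Notation C := R[i].
Implicit Types u v p q : 'I_4 -> C.

Definition gram_det u v : R := sqnorm u * sqnorm v - abs2 (\sum_e u e * (v e)^*).

Definition flip_tr u v : R :=
  abs2 (flipdot u u) + 2 * abs2 (flipdot u v) + abs2 (flipdot v v).

Lemma flipdotJ p q : flipdot (fun e => (p e)^*) (fun e => (q e)^*) = (flipdot p q)^*.
Proof. by rewrite /flipdot !conjE. Qed.

Lemma sqnormE p : (sqnorm p)%:C = \sum_e p e * (p e)^*.
Proof. by rewrite /sqnorm !sum4 !realcD !abs2E. Qed.

Lemma conj_sum4 (F : 'I_4 -> C) : (\sum_e F e)^* = \sum_e (F e)^*.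
Proof. exact: rmorph_sum. Qed.

Lemma Sval_rank2 u v :
  Sval (rank2_state u v) =
  ((sqnorm u + sqnorm v) ^+ 2 + 2 * flip_tr u v - 4 * gram_det u v)%:C.
Proof.
rewrite /rank2_state (Sval_outer2 u (fun e => (u e)^*) v (fun e => (v e)^*)) !flipdotJ.
have -> : \sum_e (u e)^* * v e = (\sum_e u e * (v e)^*)^*.
  by rewrite conj_sum4; apply: eq_bigr => e _; rewrite conjM conjCK mulrC.
rewrite big_split /= -!sqnormE /flip_tr /gram_det !realcE !abs2E; ring.
Qed.

End Rank2Correlations.

Section QuadraticRoots.
Variable R : rcfType.
Variables t d : R.

Definition qroot_hi : R := (t + Num.sqrt (t ^+ 2 - 4 * d)) / 2.
Definition qroot_lo : R := (t - Num.sqrt (t ^+ 2 - 4 * d)) / 2.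

Lemma qroot_add : qroot_hi + qroot_lo = t.
Proof. rewrite /qroot_hi /qroot_lo; lra. Qed.

Lemma qroot_le : qroot_lo <= qroot_hi.
Proof. have := sqrtr_ge0 (t ^+ 2 - 4 * d); rewrite /qroot_hi /qroot_lo; lra. Qed.

Hypothesis disc_ge0 : 4 * d <= t ^+ 2.

Let sqr_sqrt_disc : Num.sqrt (t ^+ 2 - 4 * d) ^+ 2 = t ^+ 2 - 4 * d.
Proof. by rewrite sqr_sqrtr // subr_ge0. Qed.

Lemma qroot_mul : qroot_hi * qroot_lo = d.
Proof. by have := sqr_sqrt_disc; rewrite /qroot_hi /qroot_lo => h; nra. Qed.

Lemma qroot_lo_ge0 : 0 <= t -> 0 <= d -> 0 <= qroot_lo.
Proof.
have := sqr_sqrt_disc; have := sqrtr_ge0 (t ^+ 2 - 4 * d).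
rewrite /qroot_lo => h0 h1 ht hd; nra.
Qed.

Lemma le_qroot_hi q n : 0 <= n -> q ^+ 2 - t * n * q + d * n ^+ 2 <= 0 -> q <= qroot_hi * n.
Proof.
move=> hn hq; have := sqr_sqrt_disc; have := sqrtr_ge0 (t ^+ 2 - 4 * d).
rewrite /qroot_hi; set s := Num.sqrt _ => hs0 hs.
have hb : 0 <= s * n / 2 by rewrite divr_ge0 ?mulr_ge0.
have : (q - t * n / 2) ^+ 2 <= (s * n / 2) ^+ 2 by nra.
move: hb; set a := q - _; set b := s * n / 2 => hb hab.
have : a <= b by nra.
rewrite /a /b; lra.
Qed.

End QuadraticRoots.

Lemma det_mx22 (F : comPzRingType) (A : 'M[F]_2) :
  \det A = A b0 b0 * A b1 b1 - A b0 b1 * A b1 b0.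
Proof.
rewrite (expand_det_row _ b0) sum2 /cofactor !det_mx11 !mxE /=.
have -> : lift b0 (0 : 'I_1) = b1 by apply/val_inj.
have -> : lift b1 (0 : 'I_1) = b0 by apply/val_inj.
by rewrite expr0 expr1; ring.
Qed.

Lemma char_poly_mx22 (F : comNzRingType) (A : 'M[F]_2) :
  char_poly A = 'X ^+ 2 - (\tr A)%:P * 'X + (\det A)%:P.
Proof.
rewrite /char_poly det_mx22 /mxtrace sum2 !mxE /= !mulr1n !mulr0n !sub0r.
by rewrite det_mx22 polyCD polyCB !polyCM; ring.
Qed.

Lemma char_poly_mulmxC (F : fieldType) (n m : nat) (A : 'M[F]_(n, m)) (B : 'M[F]_(m, n)) :
  'X ^+ m * char_poly (A *m B) = 'X ^+ n * char_poly (B *m A).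
Proof.
pose P := map_mx (@polyC F).
pose M : 'M[{poly F}]_(n + m) := block_mx 'X%:M (P _ _ A) (P _ _ B) 1%:M.
pose L1 : 'M[{poly F}]_(n + m) := block_mx 1%:M 0 (- P _ _ B) 1%:M.
pose L2 : 'M[{poly F}]_(n + m) := block_mx 1%:M 0 (- P _ _ B) 'X%:M.
have E1 : M *m L1 = block_mx (char_poly_mx (A *m B)) (P _ _ A) 0 1%:M.
  rewrite /M /L1 mulmx_block !mulmx1 !mulmx0 !mul1mx mulmxN !add0r addrN.
  by rewrite /char_poly_mx map_mxM.
have E2 : L2 *m M = block_mx 'X%:M (P _ _ A) 0 (char_poly_mx (B *m A)).
  rewrite /M /L2 mulmx_block !mul0mx !mul1mx mulmx1 !addr0 mulNmx.
  rewrite mul_scalar_mx mul_mx_scalar addNr addrC.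
  by rewrite /char_poly_mx map_mxM mulNmx.
have := congr1 determinant E1; have := congr1 determinant E2.
rewrite !det_mulmx /L1 /L2 !det_lblock !det_ublock !det1 !det_scalar !mul1r !mulr1.
by rewrite /char_poly => <- <-; rewrite mulrC.
Qed.

Section SpinFlip.
Variable R : rcfType.
Local Notation C := R[i].
Local Notation "A ^*m" := (map_mx (fun z : C => z^*) A) (at level 8, format "A ^*m").

Lemma conjmxM m n p (A : 'M[C]_(m, n)) (B : 'M[C]_(n, p)) : (A *m B)^*m = A^*m *m B^*m.
Proof. exact: map_mxM. Qed.

Lemma conjmx_tr m n (A : 'M[C]_(m, n)) : (A^T)^*m = (A^*m)^T.
Proof. by apply/matrixP => e f; rewrite !mxE. Qed.

Lemma conjmxK m n (A : 'M[C]_(m, n)) : A^*m^*m = A.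
Proof. by apply/matrixP => e f; rewrite !mxE conjCK. Qed.

Lemma sy2E : sy2 R = - kron2 (rpauli R k1) (rpauli R k1).
Proof.
rewrite /sy2; have -> : (1 : 'I_3) = k1 by apply/val_inj.
by rewrite pauli_rpauli kron2Z /pauli_phase /= -expr2 sqr_i scaleN1r.
Qed.

Lemma sy2_real : (sy2 R)^*m = sy2 R.
Proof.
apply/matrixP => e f; rewrite sy2E !mxE !conjE.
by repeat case: ifP => _; rewrite ?conjN ?conjC0 ?conjC1.
Qed.

Variables u v : 'I_4 -> C.

Definition frame : 'M[C]_(4, 2) := \matrix_(e, a) (if val a == 0%N then u e else v e).
Definition flipmx : 'M[C]_2 := frame^T *m sy2 R *m frame.
Definition flip_det : R :=
  abs2 (flipdot u u * flipdot v v - flipdot u v ^+ 2).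

Lemma flipmx_entries :
  [/\ flipmx b0 b0 = flipdot u u, flipmx b0 b1 = flipdot u v,
      flipmx b1 b0 = flipdot u v & flipmx b1 b1 = flipdot v v].
Proof.
by split; rewrite /flipmx sy2E !mxE !sum4 !mxE !sum4 !mxE !qbE /flipdot /=; ring.
Qed.

Lemma rank2_stateE : rank2_state u v = frame *m (frame^*m)^T.
Proof. by apply/matrixP => e f; rewrite !mxE sum2 !mxE. Qed.

Lemma rank2_state_mul_tilde :
  rank2_state u v *m rho_tilde (rank2_state u v) =
  frame *m ((frame^*m)^T *m sy2 R *m frame^*m *m frame^T *m sy2 R).
Proof.
by rewrite /rho_tilde rank2_stateE conjmxM conjmx_tr conjmxK !mulmxA.
Qed.

Definition flipsq : 'M[C]_2 := flipmx^*m *m flipmx.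

Lemma char_poly_rank2_tilde :
  char_poly (rank2_state u v *m rho_tilde (rank2_state u v)) = 'X ^+ 2 * char_poly flipsq.
Proof.
have nzX : ('X ^+ 2 : {poly C}) != 0 by rewrite expf_neq0 // polyX_eq0.
apply: (mulfI nzX); rewrite rank2_state_mul_tilde char_poly_mulmxC mulrA -exprD.
by rewrite /flipsq /flipmx !conjmxM conjmx_tr sy2_real !mulmxA.
Qed.

Lemma flipsq_entries :
  [/\ flipsq b0 b0 = (flipdot u u)^* * flipdot u u + (flipdot u v)^* * flipdot u v,
      flipsq b0 b1 = (flipdot u u)^* * flipdot u v + (flipdot u v)^* * flipdot v v,
      flipsq b1 b0 = (flipdot u v)^* * flipdot u u + (flipdot v v)^* * flipdot u v &
      flipsq b1 b1 = (flipdot u v)^* * flipdot u v + (flipdot v v)^* * flipdot v v].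
Proof.
have [E00 E01 E10 E11] := flipmx_entries.
by split; rewrite mxE sum2 2![flipmx^*m _ _]mxE ?E00 ?E01 ?E10 ?E11.
Qed.

Lemma flipsq_tr : \tr flipsq = (flip_tr u v)%:C.
Proof.
have [E00 _ _ E11] := flipsq_entries.
by rewrite /mxtrace sum2 E00 E11 /flip_tr !realcE !abs2E; ring.
Qed.

Lemma flipsq_det : \det flipsq = flip_det%:C.
Proof.
have [E00 E01 E10 E11] := flipsq_entries.
by rewrite det_mx22 E00 E01 E10 E11 /flip_det abs2E !conjE; ring.
Qed.

Lemma flip_disc : 4 * flip_det <= flip_tr u v ^+ 2.
Proof.
have tri : modulus (flipdot u u * flipdot v v - flipdot u v ^+ 2)
    <= modulus (flipdot u u) * modulus (flipdot v v) + modulus (flipdot u v) ^+ 2.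
  by rewrite -lecR !realcE -!normc_modulus (le_trans (ler_normB _ _)) // normrM normrX.
rewrite /flip_det /flip_tr -!sqr_modulus.
move: tri; set A := modulus (flipdot u u); set B := modulus (flipdot u v).
set D := modulus (flipdot v v); set E := modulus _ => tri.
have hA : 0 <= A := sqrtr_ge0 _; have hB : 0 <= B := sqrtr_ge0 _.
have hD : 0 <= D := sqrtr_ge0 _; have hE : 0 <= E := sqrtr_ge0 _.
have amgm : A * D + B ^+ 2 <= (A ^+ 2 + 2 * B ^+ 2 + D ^+ 2) / 2.
  by have := sqr_ge0 (A - D); lra.
nra.
Qed.

Definition flip_eig1 : R := qroot_hi (flip_tr u v) flip_det.
Definition flip_eig2 : R := qroot_lo (flip_tr u v) flip_det.

Lemma flip_tr_ge0 : 0 <= flip_tr u v.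
Proof. by rewrite /flip_tr !addr_ge0 ?mulr_ge0 ?abs2_ge0. Qed.

Lemma flip_eig2_ge0 : 0 <= flip_eig2.
Proof. by rewrite qroot_lo_ge0 ?flip_disc ?flip_tr_ge0 ?abs2_ge0. Qed.

Lemma flip_eig1_ge0 : 0 <= flip_eig1.
Proof. exact: le_trans flip_eig2_ge0 (qroot_le _ _). Qed.

Lemma char_poly_flipsq :
  char_poly flipsq = ('X - (flip_eig1%:C)%:P) * ('X - (flip_eig2%:C)%:P).
Proof.
rewrite char_poly_mx22 flipsq_tr flipsq_det.
rewrite -(qroot_add (flip_tr u v) flip_det) -(qroot_mul flip_disc).
by rewrite !realcE !polyCD polyCM; ring.
Qed.

Lemma flip_trE : flip_tr u v = flip_eig1 + flip_eig2.
Proof. by rewrite qroot_add. Qed.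

End SpinFlip.

Section Concurrence.
Variable R : rcfType.
Local Notation C := R[i].
Variables u v : 'I_4 -> C.

Lemma wootters_eigs_rank2 : perm_eq (wootters_eigs (rank2_state u v))
  [:: 0; 0; (flip_eig1 u v)%:C; (flip_eig2 u v)%:C].
Proof.
rewrite /wootters_eigs; case: closed_field_poly_normal => s /= Hs.
rewrite (monicP (char_poly_monic _)) scale1r in Hs.
apply: prod_XsubC_eq; rewrite -Hs char_poly_rank2_tilde char_poly_flipsq.
by rewrite !big_cons big_nil polyC0 subr0 mulr1 expr2 !mulrA.
Qed.

Lemma sqrtC_real (a : R) : 0 <= a -> sqrtC (a%:C : C) = (Num.sqrt a)%:C.
Proof. by move=> ha; rewrite -{1}(sqr_sqrtr ha) realcX sqrCK // ler0c sqrtr_ge0. Qed.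

Lemma wootters_lambdas_rank2 : wootters_lambdas (rank2_state u v) =
  [:: Num.sqrt (flip_eig1 u v); Num.sqrt (flip_eig2 u v); 0; 0].
Proof.
rewrite /wootters_lambdas; set ge := fun a b : R => b <= a.
apply: (@sorted_eq _ ge).
- by move=> b a c hab hbc; rewrite /ge (le_trans hbc hab).
- by move=> a b /andP [hab hba]; apply/le_anti; rewrite /ge in hab hba; rewrite hab hba.
- by apply: sort_sorted => a b; rewrite /ge le_total.
- by rewrite /= /ge !sqrtr_ge0 lexx ler_sqrt ?flip_eig1_ge0 ?qroot_le.
rewrite perm_sort; apply: perm_trans (perm_map _ wootters_eigs_rank2) _.
rewrite /= sqrtC0 !sqrtC_real ?flip_eig1_ge0 ?flip_eig2_ge0 //=.
by rewrite -(perm_rot 2) perm_sym.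
Qed.

Lemma concurrence_rank2 : concurrence (rank2_state u v) =
  Num.max 0 (Num.sqrt (flip_eig1 u v) - Num.sqrt (flip_eig2 u v)).
Proof. by rewrite /concurrence wootters_lambdas_rank2 /= !subr0. Qed.

End Concurrence.

Section GramBound.
Variable R : rcfType.
Local Notation C := R[i].

(* [flipdot p q] is the inner product of [p] with a signed permutation of [q]. *)
Lemma flipdot_le (p q : 'I_4 -> C) : abs2 (flipdot p q) <= sqnorm p * sqnorm q.
Proof.
pose fq (e : 'I_4) := if val e == 0%N then - q o3 else if val e == 1%N then q o2
             else if val e == 2%N then q o1 else - q o0.
have -> : flipdot p q = \sum_e p e * fq e by rewrite sum4 /flipdot /fq /=; ring.
have -> : sqnorm q = sqnorm fq by rewrite /sqnorm !sum4 /fq /= !abs2N; ring.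
exact: cauchy_schwarz4.
Qed.

Variables u v : 'I_4 -> C.

Definition comb (c0 c1 : C) (e : 'I_4) : C := c0 * u e + c1 * v e.

Definition gram_eig : R := qroot_hi (sqnorm u + sqnorm v) (gram_det u v).

Lemma gram_disc : 4 * gram_det u v <= (sqnorm u + sqnorm v) ^+ 2.
Proof.
have := sqnorm_ge0 u; have := sqnorm_ge0 v.
have := abs2_ge0 (\sum_e u e * (v e)^*); have := sqr_ge0 (sqnorm u - sqnorm v).
rewrite /gram_det; nra.
Qed.

Lemma gram_detE : gram_det u v = gram_eig * (sqnorm u + sqnorm v - gram_eig).
Proof.
move: (qroot_add (sqnorm u + sqnorm v) (gram_det u v)) (qroot_mul gram_disc).
by rewrite /gram_eig; move: (qroot_hi _ _) (qroot_lo _ _) => h l <- <-; ring.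
Qed.

Lemma gram_eig_ge0 : 0 <= gram_eig.
Proof. by rewrite /gram_eig /qroot_hi divr_ge0 ?addr_ge0 ?sqrtr_ge0 ?sqnorm_ge0. Qed.

Lemma sqnorm_combE c0 c1 : (sqnorm (comb c0 c1))%:C =
  (abs2 c0)%:C * (sqnorm u)%:C + (abs2 c1)%:C * (sqnorm v)%:C
  + c0 * c1^* * \sum_e u e * (v e)^* + c0^* * c1 * (\sum_e u e * (v e)^*)^*.
Proof. by rewrite !sqnormE /comb !sum4 !abs2E !conjE; ring. Qed.

(* [gram_eig] is the top eigenvalue of the Gram matrix of [u, v]: this is the
   Rayleigh-quotient bound. *)
Lemma sqnorm_comb_le c0 c1 : sqnorm (comb c0 c1) <= gram_eig * (abs2 c0 + abs2 c1).
Proof.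
apply: le_qroot_hi; [exact: gram_disc | by rewrite addr_ge0 ?abs2_ge0 |].
set z := \sum_e u e * (v e)^*.
have conj_real (a : R) : (a%:C)^* = a%:C :> C by exact: conjc_real.
have -> : sqnorm (comb c0 c1) ^+ 2
    - (sqnorm u + sqnorm v) * (abs2 c0 + abs2 c1) * sqnorm (comb c0 c1)
    + gram_det u v * (abs2 c0 + abs2 c1) ^+ 2
  = - abs2 (c0 * c1 * (sqnorm v - sqnorm u)%:C + c0 ^+ 2 * z - c1 ^+ 2 * z^*).
  apply: complexI; rewrite /gram_det !realcE sqnorm_combE -/z !abs2E !conjE !conj_real.
  by ring.
by rewrite oppr_le0 abs2_ge0.
Qed.

Lemma flipdot_comb a0 a1 c0 c1 :
  flipdot (comb a0 a1) (comb c0 c1) =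
  a0 * c0 * flipdot u u + (a0 * c1 + a1 * c0) * flipdot u v + a1 * c1 * flipdot v v.
Proof. by rewrite /flipdot /comb; ring. Qed.

End GramBound.

Section FlipEigenvalueBound.
Variable R : rcfType.
Local Notation C := R[i].
Variables u v : 'I_4 -> C.
Local Notation K11 := (flipdot u u).
Local Notation K12 := (flipdot u v).
Local Notation K22 := (flipdot v v).

(* For the eigenvector [w], [a := w conj(K)] satisfies
   [flipdot (comb a) (comb conj(w)) = |a|^2 = m |w|^2]; Cauchy-Schwarz and
   [sqnorm_comb_le] then give [(m |w|^2)^2 <= g^2 m |w|^4]. *)
Lemma flip_eigvec_le (w0 w1 : C) (m : R) : 0 <= m -> 0 < abs2 w0 + abs2 w1 ->
  w0 * (K11^* * K11 + K12^* * K12) + w1 * (K12^* * K11 + K22^* * K12) = m%:C * w0 ->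
  w0 * (K11^* * K12 + K12^* * K22) + w1 * (K12^* * K12 + K22^* * K22) = m%:C * w1 ->
  m <= gram_eig u v ^+ 2.
Proof.
move=> m_ge0 V_gt0 E0 E1; set V := abs2 w0 + abs2 w1 in V_gt0.
pose a0 := w0 * K11^* + w1 * K12^*.
pose a1 := w0 * K12^* + w1 * K22^*.
have /= Q := congr2 (fun x y => w0^* * x + w1^* * y) E0 E1.
have Q_mV : w0^* * (m%:C * w0) + w1^* * (m%:C * w1) = (m * V)%:C.
  by rewrite realcM realcD !abs2E; ring.
have flip_aw : flipdot (comb u v a0 a1) (comb u v w0^* w1^*) = (m * V)%:C.
  by rewrite -Q_mV -Q flipdot_comb /a0 /a1; ring.
have abs2_a : abs2 a0 + abs2 a1 = m * V.
  have a0J : a0^* = w0^* * K11 + w1^* * K12 by rewrite conjD !conjM !conjCK.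
  have a1J : a1^* = w0^* * K12 + w1^* * K22 by rewrite conjD !conjM !conjCK.
  apply: complexI; rewrite realcD !abs2E -Q_mV -Q a0J a1J /a0 /a1; ring.
have CS := flipdot_le (comb u v a0 a1) (comb u v w0^* w1^*).
have Qa := sqnorm_comb_le u v a0 a1.
have Qw := sqnorm_comb_le u v w0^* w1^*.
rewrite flip_aw abs2_real in CS; rewrite abs2_a in Qa; rewrite !abs2J -/V in Qw.
have P := le_trans CS (ler_pM (sqnorm_ge0 _) (sqnorm_ge0 _) Qa Qw).
have [->|m_neq0] := eqVneq m 0; first exact: sqr_ge0.
have m_gt0 : 0 < m by rewrite lt_def m_neq0.
rewrite -(ler_pM2r (exprn_gt0 2 V_gt0)) -(ler_pM2l m_gt0).
by move: P; lra.
Qed.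

Lemma flip_eig1_le : flip_eig1 u v <= gram_eig u v ^+ 2.
Proof.
have /eigenvalueP [w Hw w_neq0] : eigenvalue (flipsq u v) (flip_eig1 u v)%:C.
  by rewrite eigenvalue_root_char char_poly_flipsq rootM root_XsubC eqxx.
have [E00 E01 E10 E11] := flipsq_entries u v.
have E0 := congr1 (fun x : 'rV_2 => x 0 b0) Hw.
have E1 := congr1 (fun x : 'rV_2 => x 0 b1) Hw.
rewrite /= !mxE !sum2 E00 E10 in E0; rewrite /= !mxE !sum2 E01 E11 in E1.
apply: flip_eigvec_le (flip_eig1_ge0 u v) _ E0 E1.
rewrite lt_def addr_ge0 ?abs2_ge0 // andbT; apply: contra w_neq0.
rewrite paddr_eq0 ?abs2_ge0 // !abs2_eq0 => /andP [/eqP w0 /eqP w1].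
apply/eqP/rowP => a; rewrite mxE; case: a => [[|[|//]] ?];
  [rewrite -w0 | rewrite -w1]; congr (w 0 _); exact/val_inj.
Qed.

End FlipEigenvalueBound.

(* With [s := sqrt m1 > 2/3] and [s <= g], [g (1 - g) <= s (1 - s)], so the
   excess is at least [2 s^2 - 4 s (1 - s) = 2 s (3 s - 2) > 0]. *)
Lemma steering_excess_gt0 (R : rcfType) (m1 m2 g : R) :
  0 <= m1 -> 0 <= m2 -> 0 <= g -> m1 <= g ^+ 2 ->
  4 / 9 < Num.max 0 (Num.sqrt m1 - Num.sqrt m2) ^+ 2 ->
  0 < 2 * (m1 + m2) - 4 * (g * (1 - g)).
Proof.
move=> m1_ge0 m2_ge0 g_ge0 s_le.
have s_ge0 := sqrtr_ge0 m1; have t_ge0 := sqrtr_ge0 m2; have s_sq := sqr_sqrtr m1_ge0.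
set s := Num.sqrt m1 in s_ge0 s_sq *; set t := Num.sqrt m2 in t_ge0 *.
rewrite -s_sq in s_le * => conc.
have : 2 / 3 < Num.max 0 (s - t).
  rewrite -ltr_sqr ?nnegrE ?le_max ?lexx ?divr_ge0 ?ler0n //.
  by rewrite expr2 mulf_div -!natrM; exact: conc.
rewrite lt_max => /orP [|c_gt]; first lra.
have {}s_le : s <= g by rewrite -ler_sqr ?nnegrE.
have : 0 <= (g - s) * (g + s - 1) by apply: mulr_ge0; lra.
have : 0 < s * (3 * s - 2) by apply: mulr_gt0; lra.
lra.
Qed.

Theorem theorem3 (R : rcfType) (psi : three_qubit_state R) (i j : 'I_3) :
  normalized psi -> i != j ->
  4 / 9 < concurrence (reduced psi i j) ^+ 2 ->
  1 < Sval (reduced psi i j).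
Proof.
move=> psi_normalized hij.
rewrite (reduced_branches psi hij) concurrence_rank2 Sval_rank2.
have := normalized_branches hij psi_normalized.
set u := branch psi i j b0; set v := branch psi i j b1 => norm1 conc.
rewrite gram_detE norm1 flip_trE expr1n.
rewrite -[1 : R[i]]/((1 : R)%:C) ltcR.
have := steering_excess_gt0 (flip_eig1_ge0 u v) (flip_eig2_ge0 u v)
  (gram_eig_ge0 u v) (flip_eig1_le u v) conc.
lra.
Qed.
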